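(* Let $\mathcal J$ be an instance with locations $c_1,\dots,c_k$, and for $i\in[k]$ let $C_i$ be the set of data points located at $c_i$; assume each $C_i$ is $3$-approximately fair. Consider a fairlet decomposition for $(C_1,\dots,C_k)$: for each $i$, $F_i\subseteq C_i$ is a maximal exactly fair subset of $C_i$, decomposed into $|F_i|/f$ fairlets, and $P_i=C_i\setminus F_i$ is the set of problematic points. Then $|P_i|<4f$ for every $i\in[k]$.
   Context: Data points $X$ are partitioned into groups $X_1,\dots,X_\ell$. A set $S$ is exactly fair if $|S\cap X_j|=\frac{|X_j|}{|X|}|S|$ for all $j$. A fairlet is a minimum-size non-empty exactly fair subset of $X$; its size is $f$ and it contains $f_j\ge1$ points of group $j$ (so $f_j/f=|X_j|/|X|$). A set $S$ is $\gamma$-approximately fair if $\bigl||S\cap X_j|-\frac{f_j}{f}|S|\bigr|\le\gamma$ for all $j\in[\ell]$. *)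

From mathcomp Require Import all_boot all_order all_algebra.
Set Implicit Arguments. Unset Strict Implicit. Unset Printing Implicit Defensive.
Import Order.TTheory GRing.Theory Num.Theory.
Local Open Scope ring_scope.

Section Fair.
Variables (T : finType) (l : nat).

(* The data set X; group membership is given by a labelling g : T -> 'I_l,
   so that X_j = { x in X | g x = j } partitions X into l groups. *)
Definition group (X : {set T}) (g : T -> 'I_l) (j : 'I_l) : {set T} :=
  [set x in X | g x == j].

Definition exactly_fair (X : {set T}) (g : T -> 'I_l) (S : {set T}) : Prop :=
  forall j : 'I_l,
    (#|S :&: group X g j|)%:R = ((#|group X g j|)%:R / (#|X|)%:R) * (#|S|)%:R :> rat.

Definition is_fairlet (X : {set T}) (g : T -> 'I_l) (Fl : {set T}) : Prop :=
  [/\ Fl \subset X, Fl != set0, exactly_fair X g Fl &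
      forall S : {set T}, S \subset X -> S != set0 -> exactly_fair X g S ->
        (#|Fl| <= #|S|)%N].

Definition fsize (Fl : {set T}) : nat := #|Fl|.
Definition fj (X : {set T}) (g : T -> 'I_l) (Fl : {set T}) (j : 'I_l) : nat :=
  #|Fl :&: group X g j|.

Definition approx_fair (X : {set T}) (g : T -> 'I_l) (Fl : {set T})
    (gamma : rat) (S : {set T}) : Prop :=
  forall j : 'I_l,
    `| (#|S :&: group X g j|)%:R - ((fj X g Fl j)%:R / (fsize Fl)%:R) * (#|S|)%:R |
      <= gamma.

Definition max_fair_subset (X : {set T}) (g : T -> 'I_l) (C F : {set T}) : Prop :=
  [/\ F \subset C, exactly_fair X g F &
      forall S : {set T}, F \subset S -> S \subset C -> exactly_fair X g S -> S = F].

End Fair.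

From mathcomp Require Import all_boot all_order all_algebra.
From mathcomp Require Import lra.
Set Implicit Arguments. Unset Strict Implicit. Unset Printing Implicit Defensive.
Import Order.TTheory GRing.Theory Num.Theory.
Local Open Scope ring_scope.

(* Suppose the problematic part P = C \ F of some location had at least 4f
   points.  Since F is exactly fair and C is 3-approximately fair, P is
   3-approximately fair as well, so each group j meets P in at least
   4 f_j - 3 >= f_j points.  Picking f_j points of each group j inside P gives
   a non-empty exactly fair set S disjoint from F, and F ∪ S is an exactly fair
   subset of C strictly larger than F, contradicting the maximality of F. *)

Lemma exists_subset_card (T : finType) (A : {set T}) (n : nat) :
  (n <= #|A|)%N -> exists2 B : {set T}, B \subset A & #|B| = n.
Proof.
move=> /card_geqP [s [uniq_s <- sA]]; exists [set x in s].
  by apply/subsetP => x; rewrite inE; apply: sA.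
by rewrite cardsE (card_uniqP uniq_s).
Qed.

Lemma cardsID_sub (T : finType) (C F A : {set T}) :
  F \subset C -> #|C :&: A| = (#|F :&: A| + #|(C :\: F) :&: A|)%N.
Proof.
by move=> sFC; rewrite -(cardsID F (C :&: A)) setIAC (setIidPr sFC) setIDAC.
Qed.

Section Fair.
Variables (T : finType) (l : nat) (X : {set T}) (g : T -> 'I_l).

Local Notation G := (group X g).

Lemma card_groups_sum (S : {set T}) :
  S \subset X -> #|S| = (\sum_(j < l) #|S :&: G j|)%N.
Proof.
move=> sSX; rewrite -sum1_card (partition_big g predT) //=.
apply: eq_bigr => j _; rewrite -sum1_card; apply: eq_bigl => x.
rewrite !inE; case Sx: (x \in S) => //=.
by rewrite (subsetP sSX x Sx).
Qed.

Lemma exactly_fairU (A B : {set T}) :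
  [disjoint A & B] -> exactly_fair X g A -> exactly_fair X g B ->
  exactly_fair X g (A :|: B).
Proof.
move=> dAB fairA fairB j.
have dABj : (A :&: G j) :&: (B :&: G j) = set0.
  by rewrite setIACA setIid (disjoint_setI0 dAB) set0I.
rewrite setIUl !cardsU dABj (disjoint_setI0 dAB) cards0 !subn0 !natrD.
by rewrite fairA fairB mulrDr.
Qed.

Lemma card_same_profile (Fl S : {set T}) :
  Fl \subset X -> S \subset X ->
  (forall j, #|S :&: G j| = #|Fl :&: G j|) -> #|S| = #|Fl|.
Proof.
by move=> sFlX sSX profile; rewrite !card_groups_sum //; apply: eq_bigr.
Qed.

Lemma exactly_fair_same_profile (Fl S : {set T}) :
  Fl \subset X -> S \subset X -> exactly_fair X g Fl ->
  (forall j, #|S :&: G j| = #|Fl :&: G j|) -> exactly_fair X g S.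
Proof.
move=> sFlX sSX fairFl profile j.
by rewrite profile (card_same_profile sFlX sSX profile); apply: fairFl.
Qed.

Lemma exists_subset_profile (P : {set T}) (n : 'I_l -> nat) :
  (forall j, n j <= #|P :&: G j|)%N ->
  exists2 S : {set T}, S \subset P & forall j, #|S :&: G j| = n j.
Proof.
move=> n_le; have [B sBPG cardB] := fin_all_exists2 (fun j => exists_subset_card (n_le j)).
have sBG j : B j \subset G j by apply: subset_trans (sBPG j) (subsetIr _ _).
exists (\bigcup_(j < l) B j).
  by apply/bigcupsP => j _; apply: subset_trans (sBPG j) (subsetIl _ _).
move=> j; rewrite -cardB; apply: eq_card => x; rewrite inE.
apply/andP/idP => [[/bigcupP [i _ Bix] Gjx] | Bjx]; last first.
  by split; [apply/bigcupP; exists j | apply: (subsetP (sBG j))].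
have := subsetP (sBG i) x Bix; move: Gjx; rewrite !inE => /andP [_ /eqP ->].
by move=> /andP [_ /eqP ->].
Qed.

Lemma max_fair_subset_diff (C F S : {set T}) :
  max_fair_subset X g C F -> S \subset C :\: F -> exactly_fair X g S -> S = set0.
Proof.
move=> [sFC fairF maxF] /subsetDP [sSC dSF] fairS.
have dFS : [disjoint F & S] by rewrite disjoint_sym.
have sFSC : F :|: S \subset C by rewrite subUset sFC.
have FSF := maxF _ (subsetUl F S) sFSC (exactly_fairU dFS fairF fairS).
apply/eqP; rewrite -subset0 -(setIidPr (subsetUr F S)) FSF (disjoint_setI0 dFS).
exact: subxx.
Qed.

Section ApproxFair.
Variables (Fl : {set T}) (fairFl : exactly_fair X g Fl) (Fl_neq0 : Fl != set0).

Local Notation f := (fsize Fl).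
Local Notation fj := (fj X g Fl).

Lemma fsize_gt0 : (0 < f)%N.
Proof. by rewrite card_gt0. Qed.

Lemma fj_ratio j : (fj j)%:R / f%:R = (#|G j|)%:R / (#|X|)%:R :> rat.
Proof.
have f_neq0 : f%:R != 0 :> rat by rewrite pnatr_eq0 -lt0n fsize_gt0.
by rewrite /fj fairFl mulfK.
Qed.

Lemma approx_fair_setD (gamma : rat) (C F : {set T}) j :
  approx_fair X g Fl gamma C -> F \subset C -> exactly_fair X g F ->
  (fj j)%:R / f%:R * (#|C :\: F|)%:R - gamma <= (#|(C :\: F) :&: G j|)%:R.
Proof.
move=> /(_ j) approxC sFC /(_ j) fairF.
move: approxC; rewrite fj_ratio ler_norml => /andP [approxC _].
move: approxC fairF; rewrite (cardsID_sub (G j) sFC) -(setIT C) (cardsID_sub setT sFC).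
rewrite !setIT !natrD; move: (_ / _) => q; nra.
Qed.

Lemma fj_le_card_setD (C F : {set T}) j :
  approx_fair X g Fl 3 C -> F \subset C -> exactly_fair X g F -> (0 < fj j)%N ->
  (4 * f <= #|C :\: F|)%N -> (fj j <= #|(C :\: F) :&: G j|)%N.
Proof.
move=> approxC sFC fairF fj_gt0 /(leq_mul (leqnn (fj j))) big.
have lower := approx_fair_setD j approxC sFC fairF.
have four_fj_le : 4 * (fj j)%:R <= (fj j)%:R / f%:R * (#|C :\: F|)%:R :> rat.
  rewrite mulrAC ler_pdivlMr ?ltr0n ?fsize_gt0 //.
  by rewrite -!natrM ler_nat (mulnC 4) -mulnA.
have fj_ge1 : 1 <= (fj j)%:R :> rat by rewrite ler1n.
by rewrite -(ler_nat rat); lra.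
Qed.

End ApproxFair.

End Fair.

Theorem lemma3 (T : finType) (l : nat) (X : {set T}) (g : T -> 'I_l)
    (Fl : {set T}) (hFl : is_fairlet X g Fl)
    (hfj : forall j : 'I_l, (0 < fj X g Fl j)%N)
    (k : nat) (C F : 'I_k -> {set T})
    (hCX : forall i, C i \subset X)
    (hC : forall i, approx_fair X g Fl 3 (C i))
    (hF : forall i, max_fair_subset X g (C i) (F i)) :
  forall i : 'I_k, (#|C i :\: F i| < 4 * fsize Fl)%N.
Proof.
case: hFl => sFlX Fl_neq0 fairFl _ i; rewrite ltnNge; apply/negP => big.
have [sFC fairF _] := hF i.
have [S sSP profileS] := exists_subset_profile
  (fun j => fj_le_card_setD fairFl Fl_neq0 (hC i) sFC fairF (hfj j) big).
have sSX : S \subset X by rewrite (subset_trans sSP) // (subset_trans (subsetDl _ _)).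
have S0 := max_fair_subset_diff (hF i) sSP
  (exactly_fair_same_profile sFlX sSX fairFl profileS).
have := fsize_gt0 Fl_neq0.
by rewrite /fsize -(card_same_profile sFlX sSX profileS) S0 cards0.
Qed.
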